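(* Let $m\ge1$ be an integer, $0<T<\infty$, and let $u$ be a smooth finite-energy solution of $u_t=u_{rr}+\frac1ru_r-\frac{m^2}{2r^2}\sin(2u)$ on $(0,T)$. Then no energy concentration at spatial infinity is possible: $$\lim_{R\to\infty}\limsup_{t\to T}E(u(t);B_R^c)=0,$$ where $E(u;B_R^c)=\frac12\int_R^\infty\big(u_r^2+\frac{m^2\sin^2u}{r^2}\big)r\,dr$.
   Context: $u(t,r)$ is the angle function of an $m$-corotational map $\mathbb R^2\to\mathbb S^2$ evolving by the harmonic map heat flow; finite energy means $E(u)=\frac12\int_0^\infty(u_r^2+\frac{m^2\sin^2u}{r^2})r\,dr<\infty$. *)

From Stdlib Require Import Reals List.
From Coquelicot Require Import Coquelicot.
Open Scope R_scope.

(* Iterated partial derivatives of a function of (t, r):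
   [true] = derivative in t, [false] = derivative in r; the list is read
   outermost-first. *)
Fixpoint pderiv (l : list bool) (f : R -> R -> R) : R -> R -> R :=
  match l with
  | nil => f
  | true :: l' => fun t r => Derive (fun s => pderiv l' f s r) t
  | false :: l' => fun t r => Derive (fun s => pderiv l' f t s) r
  end.

Definition smooth_on (D : R -> R -> Prop) (f : R -> R -> R) : Prop :=
  forall (l : list bool) (t r : R), D t r ->
    continuous (fun p : R * R => pderiv l f (fst p) (snd p)) (t, r) /\
    ex_derive (fun s => pderiv l f s r) t /\
    ex_derive (fun s => pderiv l f t s) r.

(* energy density (including the r dr measure) of the angle function v *)
Definition energy_density (m : nat) (v : R -> R) (r : R) : R :=
  / 2 * ((Derive v r) ^ 2 + (INR m) ^ 2 * (sin (v r)) ^ 2 / r ^ 2) * r.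

Definition has_energy (m : nat) (v : R -> R) (e : R) : Prop :=
  is_RInt_gen (energy_density m v) (at_right 0) (Rbar_locally p_infty) e.

Definition energy_out (m : nat) (v : R -> R) (Rad : R) : R :=
  RInt_gen (energy_density m v) (at_point Rad) (Rbar_locally p_infty).

Definition hmhf_solution (m : nat) (T : R) (u : R -> R -> R) : Prop :=
  forall t r, 0 < t < T -> 0 < r ->
    pderiv (true :: nil) u t r =
      pderiv (false :: false :: nil) u t r
      + / r * pderiv (false :: nil) u t r
      - (INR m) ^ 2 / (2 * r ^ 2) * sin (2 * u t r).

From Stdlib Require Import Reals List Lra Psatz.
From Coquelicot Require Import Coquelicot.
Open Scope R_scope.

(* With a cutoff [psi] vanishing near [R0] and near [2 A], the equation gives
   [d/dt int psi^2 e <= 2 int psi'^2 e], because the flux [psi^2 r u_r u_t]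
   integrates to zero and the remaining defect is a sum of squares.  For a
   piecewise linear [psi] that equals 1 on [[2 R0, A]], [psi'^2 <= 1 / R0^2], so
   the energy of [u(t)] in [[2 R0, A]] is at most the energy of [u(t0)] in
   [[R0, 2 A]] plus [4 M (t - t0) / R0^2].  With [t0 = T/2] the first term is a
   tail of the finite energy [E(u(t0))] and the second is [O(M T / R0^2)]; both
   are small for [R0] large, uniformly in [A]. *)

Section ImproperIntegral.

Variable f : R -> R.
Hypothesis f_ex_RInt : forall a b, 0 < a -> a <= b -> ex_RInt f a b.
Hypothesis f_ge0 : forall x, 0 < x -> 0 <= f x.

Lemma RInt_ge0 a b : 0 < a -> a <= b -> 0 <= RInt f a b.
Proof.
  intros Ha Hab. apply RInt_ge_0; auto.
  intros x Hx. apply f_ge0. lra.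
Qed.

Lemma RInt_Chasles_pos a b c : 0 < a -> a <= b -> b <= c ->
  RInt f a b + RInt f b c = RInt f a c.
Proof.
  intros Ha Hab Hbc.
  exact (RInt_Chasles (V:=R_CompleteNormedModule) f a b c
           (f_ex_RInt a b Ha Hab) (f_ex_RInt b c ltac:(lra) Hbc)).
Qed.

Lemma RInt_le_subinterval a b c d : 0 < a -> a <= b -> b <= c -> c <= d ->
  RInt f b c <= RInt f a d.
Proof.
  intros Ha Hab Hbc Hcd.
  rewrite <- (RInt_Chasles_pos a b d), <- (RInt_Chasles_pos b c d) by lra.
  pose proof (RInt_ge0 a b). pose proof (RInt_ge0 c d). lra.
Qed.

Lemma is_RInt_gen_RInt_near l eps :
  is_RInt_gen f (at_right 0) (Rbar_locally p_infty) l -> 0 < eps ->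
  exists d N, 0 < d /\
    forall x y, 0 < x < d -> N < y -> Rabs (RInt f x y - l) < eps.
Proof.
  intros Hl Heps.
  destruct (proj1 (filterlimi_locally _ _) Hl (mkposreal eps Heps))
    as [Q P [d Hd] [N HN] HQP].
  exists d, N. split; [apply cond_pos|]. intros x y Hx Hy.
  destruct (HQP x y) as [z [Hz Hzl]].
  - apply Hd; [|lra]. unfold ball; simpl. unfold AbsRing_ball, abs, minus, plus, opp; simpl.
    rewrite Rabs_right; lra.
  - apply HN. lra.
  - simpl in Hz. rewrite (is_RInt_unique _ _ _ _ Hz). exact Hzl.
Qed.

Lemma RInt_le_is_RInt_gen l a b :
  is_RInt_gen f (at_right 0) (Rbar_locally p_infty) l -> 0 < a -> a <= b ->
  RInt f a b <= l.
Proof.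
  intros Hl Ha Hab. apply le_epsilon. intros eps Heps.
  destruct (is_RInt_gen_RInt_near l eps Hl Heps) as [d [N [Hd HN]]].
  pose proof (Rmin_l a (d / 2)) as Hxa. pose proof (Rmin_r a (d / 2)) as Hxd.
  pose proof (Rmax_l b (Rabs N + 1)) as Hyb. pose proof (Rmax_r b (Rabs N + 1)) as HyN.
  assert (Hx : 0 < Rmin a (d / 2)) by (apply Rmin_glb_lt; lra).
  pose proof (Rle_abs N).
  assert (Hxy := HN (Rmin a (d / 2)) (Rmax b (Rabs N + 1)) ltac:(lra) ltac:(lra)).
  apply Rabs_def2 in Hxy.
  pose proof (RInt_le_subinterval _ a b _ Hx Hxa Hab Hyb). lra.
Qed.

Lemma RInt_tail_small l eps :
  is_RInt_gen f (at_right 0) (Rbar_locally p_infty) l -> 0 < eps ->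
  exists N, 0 < N /\ forall a b, N <= a -> a <= b -> RInt f a b <= eps.
Proof.
  intros Hl Heps.
  destruct (is_RInt_gen_RInt_near l (eps / 2) Hl ltac:(lra)) as [d [N [Hd HN]]].
  pose proof (Rle_abs N). pose proof (Rabs_pos N).
  exists (Rabs N + d + 1). split; [lra|]. intros a b Ha Hab.
  assert (Ha' := HN (d / 2) a ltac:(lra) ltac:(lra)).
  assert (Hb' := HN (d / 2) b ltac:(lra) ltac:(lra)).
  apply Rabs_def2 in Ha'. apply Rabs_def2 in Hb'.
  pose proof (RInt_Chasles_pos (d / 2) a b ltac:(lra) ltac:(lra) Hab). lra.
Qed.

(* [RInt_gen] is junk unless the improper integral converges; here convergence
   comes from monotonicity, the limit being the supremum of [RInt f a b]. *)
Lemma RInt_gen_pinfty_le a X : 0 < a ->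
  (forall b, a < b -> RInt f a b <= X) ->
  RInt_gen f (at_point a) (Rbar_locally p_infty) <= X.
Proof.
  intros Ha HX.
  set (E := fun y => exists b, a < b /\ y = RInt f a b).
  assert (HE : forall y, E y -> y <= X) by (intros y [b [Hb ->]]; auto).
  destruct (completeness E) as [L [HLub HLleast]].
  - exists X. exact HE.
  - exists (RInt f a (a + 1)), (a + 1). split; [lra | reflexivity].
  - assert (HL : is_RInt_gen f (at_point a) (Rbar_locally p_infty) L).
    { apply filterlimi_locally. intros eps.
      assert (Hb0 : exists b0, a < b0 /\ L - eps < RInt f a b0).
      { apply Classical_Prop.NNPP. intros Hn.
        assert (L <= L - eps).
        { apply HLleast. intros y [b [Hb ->]].
          apply Rnot_lt_le. intros Hlt. apply Hn. exists b. auto. }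
        pose proof (cond_pos eps). lra. }
      destruct Hb0 as [b0 [Hb0 Hb0L]].
      apply (Filter_prod _ _ _ (fun x => x = a) (fun y => b0 < y)).
      - reflexivity.
      - exists b0. auto.
      - intros x y -> Hy. exists (RInt f a y). split.
        + apply (RInt_correct (V:=R_CompleteNormedModule)). apply f_ex_RInt; lra.
        + unfold ball; simpl. unfold AbsRing_ball, abs, minus, plus, opp; simpl.
          pose proof (RInt_le_subinterval a a b0 y Ha ltac:(lra) ltac:(lra) ltac:(lra)).
          assert (RInt f a y <= L) by (apply HLub; exists y; split; [lra | reflexivity]).
          apply Rabs_def1; lra. }
    rewrite (is_RInt_gen_unique _ _ HL). apply HLleast. exact HE.
Qed.

End ImproperIntegral.

Lemma le_of_Derive_le (g : R -> R) (C a b : R) : a <= b ->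
  (forall s, a <= s <= b -> ex_derive g s /\ Derive g s <= C) ->
  g b <= g a + C * (b - a).
Proof.
  intros Hab Hg.
  destruct (MVT_gen g a b (Derive g)) as [c [Hc Hgc]];
    rewrite ?Rmin_left, ?Rmax_right in * by lra.
  - intros s Hs. apply Derive_correct, Hg. lra.
  - intros s Hs. apply continuity_pt_filterlim, (ex_derive_continuous (V:=R_NormedModule)).
    apply Hg, Hs.
  - pose proof (proj2 (Hg c Hc)). nra.
Qed.

Lemma energy_density_ge0 m v r : 0 < r -> 0 <= energy_density m v r.
Proof.
  intros Hr. unfold energy_density.
  assert (0 <= INR m ^ 2 * sin (v r) ^ 2 / r ^ 2).
  { apply Rmult_le_pos; [nra|]. left. apply Rinv_0_lt_compat, pow_lt, Hr. }
  pose proof (pow2_ge_0 (Derive v r)). nra.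
Qed.

Lemma continuity_2d_pt_continuous_snd (F : R -> R -> R) t r :
  continuity_2d_pt F t r -> continuous (F t) r.
Proof.
  intros HF. apply continuity_2d_pt_filterlim in HF.
  exact (continuous_comp_2 (fun _ => t) (fun x => x) F r
           (continuous_const t r) (continuous_id r) HF).
Qed.

Section HeatFlow.

Variables (m : nat) (T : R) (u : R -> R -> R).
Hypothesis u_smooth : smooth_on (fun t r => 0 < t < T /\ 0 < r) u.
Hypothesis u_solves : hmhf_solution m T u.

Local Notation u_t := (pderiv (true :: nil) u).
Local Notation u_r := (pderiv (false :: nil) u).
Local Notation u_rr := (pderiv (false :: false :: nil) u).
Local Notation u_rt := (pderiv (true :: false :: nil) u).
Local Notation u_tr := (pderiv (false :: true :: nil) u).
Local Notation dens t := (energy_density m (u t)).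

Lemma pderiv_continuity_2d l t r : 0 < t < T -> 0 < r ->
  continuity_2d_pt (pderiv l u) t r.
Proof.
  intros Ht Hr. apply continuity_2d_pt_filterlim.
  exact (proj1 (u_smooth l t r (conj Ht Hr))).
Qed.

Lemma pderiv_ex_derive_t l t r : 0 < t < T -> 0 < r ->
  ex_derive (fun s => pderiv l u s r) t.
Proof. intros Ht Hr. exact (proj1 (proj2 (u_smooth l t r (conj Ht Hr)))). Qed.

Lemma pderiv_ex_derive_r l t r : 0 < t < T -> 0 < r ->
  ex_derive (pderiv l u t) r.
Proof. intros Ht Hr. exact (proj2 (proj2 (u_smooth l t r (conj Ht Hr)))). Qed.

Lemma locally_2d_domain (P : R -> R -> Prop) t r : 0 < t < T -> 0 < r ->
  (forall t' r', 0 < t' < T -> 0 < r' -> P t' r') -> locally_2d P t r.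
Proof.
  intros Ht Hr HP.
  assert (Hd : 0 < Rmin (Rmin t (T - t)) r) by (repeat apply Rmin_glb_lt; lra).
  exists (mkposreal _ Hd). simpl. intros t' r' Ht' Hr'.
  pose proof (Rmin_l (Rmin t (T - t)) r). pose proof (Rmin_r (Rmin t (T - t)) r).
  pose proof (Rmin_l t (T - t)). pose proof (Rmin_r t (T - t)).
  apply Rabs_def2 in Ht'. apply Rabs_def2 in Hr'.
  apply HP; lra.
Qed.

Lemma u_rt_eq_u_tr t r : 0 < t < T -> 0 < r -> u_rt t r = u_tr t r.
Proof.
  intros Ht Hr. apply (Schwarz u t r).
  - apply locally_2d_domain; auto. intros t' r' Ht' Hr'. repeat split.
    + exact (pderiv_ex_derive_t nil t' r' Ht' Hr').
    + exact (pderiv_ex_derive_r nil t' r' Ht' Hr').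
    + exact (pderiv_ex_derive_t (false :: nil) t' r' Ht' Hr').
    + exact (pderiv_ex_derive_r (true :: nil) t' r' Ht' Hr').
  - exact (pderiv_continuity_2d (true :: false :: nil) t r Ht Hr).
  - exact (pderiv_continuity_2d (false :: true :: nil) t r Ht Hr).
Qed.

Ltac continuity_2d_of_pderivs Ht Hr :=
  repeat match goal with
  | |- continuity_2d_pt (fun x y => @?f x y + @?g x y) _ _ =>
       apply (continuity_2d_pt_plus f g)
  | |- continuity_2d_pt (fun x y => @?f x y - @?g x y) _ _ =>
       apply (continuity_2d_pt_minus f g)
  | |- continuity_2d_pt (fun x y => @?f x y * @?g x y) _ _ =>
       apply (continuity_2d_pt_mult f g)
  | |- continuity_2d_pt (fun x y => @?f x y / @?g x y) _ _ => unfold Rdiv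
  | |- continuity_2d_pt (fun x y => / @?f x y) _ _ =>
       apply (continuity_2d_pt_inv f); [|simpl]
  | |- continuity_2d_pt (fun x y => (@?f x y) ^ ?n) _ _ =>
       apply (continuity_1d_2d_pt_comp (fun z => z ^ n) f);
       [apply derivable_continuous_pt, derivable_pt_pow|]
  | |- continuity_2d_pt (fun x y => sin (@?f x y)) _ _ =>
       apply (continuity_1d_2d_pt_comp sin f); [apply continuity_sin|]
  | |- continuity_2d_pt (fun x y => cos (@?f x y)) _ _ =>
       apply (continuity_1d_2d_pt_comp cos f); [apply continuity_cos|]
  | |- continuity_2d_pt (fun x y => y) _ _ => apply continuity_2d_pt_id2
  | |- continuity_2d_pt (fun x y => x) _ _ => apply continuity_2d_pt_id1
  | |- continuity_2d_pt (fun x y => ?c) _ _ => apply continuity_2d_pt_const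
  | |- continuity_2d_pt _ _ _ =>
       first [ exact (pderiv_continuity_2d nil _ _ Ht Hr)
             | exact (pderiv_continuity_2d (false :: nil) _ _ Ht Hr)
             | exact (pderiv_continuity_2d (true :: nil) _ _ Ht Hr)
             | exact (pderiv_continuity_2d (false :: false :: nil) _ _ Ht Hr)
             | exact (pderiv_continuity_2d (true :: false :: nil) _ _ Ht Hr)
             | exact (pderiv_continuity_2d (false :: true :: nil) _ _ Ht Hr) ]
  end; try lra; try nra.

Definition weighted_density_dt (a b t r : R) : R :=
  (a * r + b) ^ 2 * (/ 2 * (2 * u_r t r * u_rt t r
     + INR m ^ 2 * (2 * sin (u t r) * cos (u t r) * u_t t r) / r ^ 2) * r).

Definition flux (a b t r : R) : R := (a * r + b) ^ 2 * r * u_r t r * u_t t r.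

Definition flux_dr (a b t r : R) : R :=
  2 * (a * r + b) * a * r * u_r t r * u_t t r
  + (a * r + b) ^ 2 * u_r t r * u_t t r
  + (a * r + b) ^ 2 * r * u_rr t r * u_t t r
  + (a * r + b) ^ 2 * r * u_r t r * u_tr t r.

Lemma is_derive_weighted_density a b t r : 0 < t < T -> 0 < r ->
  is_derive (fun s => (a * r + b) ^ 2 * dens s r) t (weighted_density_dt a b t r).
Proof.
  intros Ht Hr.
  change (is_derive (fun s => (a * r + b) ^ 2
    * (/ 2 * (u_r s r ^ 2 + INR m ^ 2 * sin (u s r) ^ 2 / r ^ 2) * r)) t
    (weighted_density_dt a b t r)).
  unfold weighted_density_dt.
  pose proof (pderiv_ex_derive_t (false :: nil) t r Ht Hr).
  pose proof (pderiv_ex_derive_t nil t r Ht Hr).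
  auto_derive; [tauto|]. simpl. field. lra.
Qed.

Lemma is_derive_flux a b t r : 0 < t < T -> 0 < r ->
  is_derive (flux a b t) r (flux_dr a b t r).
Proof.
  intros Ht Hr. unfold flux, flux_dr.
  pose proof (pderiv_ex_derive_r (false :: nil) t r Ht Hr).
  pose proof (pderiv_ex_derive_r (true :: nil) t r Ht Hr).
  auto_derive; [tauto|]. simpl. ring.
Qed.

(* With [psi = a r + b], the defect
   [flux_dr + 2 a^2 dens - weighted_density_dt] equals
   [r (psi u_t + a u_r)^2 + a^2 m^2 sin^2 u / r] once the equation is used
   to eliminate [u_rr]. *)
Lemma weighted_density_dt_le a b t r : 0 < t < T -> 0 < r ->
  weighted_density_dt a b t r <= flux_dr a b t r + 2 * a ^ 2 * dens t r.
Proof.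
  intros Ht Hr.
  assert (Hrr : u_rr t r = u_t t r - / r * u_r t r
                  + INR m ^ 2 / (2 * r ^ 2) * (2 * sin (u t r) * cos (u t r))).
  { rewrite <- sin_2a. pose proof (u_solves t r Ht Hr). simpl in *. lra. }
  unfold weighted_density_dt, flux_dr, energy_density.
  change (Derive (u t) r) with (u_r t r).
  rewrite (u_rt_eq_u_tr t r Ht Hr), Hrr.
  set (psi := a * r + b).
  assert (Hdefect : 0 <= r * (psi * u_t t r + a * u_r t r) ^ 2
                          + a ^ 2 * INR m ^ 2 * sin (u t r) ^ 2 / r).
  { assert (0 <= a ^ 2 * INR m ^ 2 * sin (u t r) ^ 2 / r).
    { apply Rmult_le_pos; [nra|]. left. apply Rinv_0_lt_compat, Hr. }
    pose proof (pow2_ge_0 (psi * u_t t r + a * u_r t r)). nra. }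
  match goal with |- ?lhs <= ?rhs =>
    replace rhs with (lhs + (r * (psi * u_t t r + a * u_r t r) ^ 2
                             + a ^ 2 * INR m ^ 2 * sin (u t r) ^ 2 / r))
      by (unfold psi; field; lra)
  end.
  lra.
Qed.

Lemma weighted_density_continuity_2d a b t r : 0 < t < T -> 0 < r ->
  continuity_2d_pt (fun t r => (a * r + b) ^ 2 * dens t r) t r.
Proof. intros Ht Hr. unfold energy_density. continuity_2d_of_pderivs Ht Hr. Qed.

Lemma weighted_density_dt_continuity_2d a b t r : 0 < t < T -> 0 < r ->
  continuity_2d_pt (weighted_density_dt a b) t r.
Proof. intros Ht Hr. unfold weighted_density_dt. continuity_2d_of_pderivs Ht Hr. Qed.

Lemma flux_dr_continuity_2d a b t r : 0 < t < T -> 0 < r ->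
  continuity_2d_pt (flux_dr a b) t r.
Proof. intros Ht Hr. unfold flux_dr. continuity_2d_of_pderivs Ht Hr. Qed.

Lemma ex_RInt_weighted_density a b t r1 r2 : 0 < t < T -> 0 < r1 -> r1 <= r2 ->
  ex_RInt (fun r => (a * r + b) ^ 2 * dens t r) r1 r2.
Proof.
  intros Ht Hr1 Hr12. apply (ex_RInt_continuous (V:=R_CompleteNormedModule)).
  intros r Hr. rewrite Rmin_left, Rmax_right in Hr by lra.
  apply (continuity_2d_pt_continuous_snd (fun t r => (a * r + b) ^ 2 * dens t r)).
  apply weighted_density_continuity_2d; lra.
Qed.

Lemma ex_RInt_density t r1 r2 : 0 < t < T -> 0 < r1 -> r1 <= r2 ->
  ex_RInt (dens t) r1 r2.
Proof.
  intros Ht Hr1 Hr12.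
  apply (ex_RInt_ext (V:=R_NormedModule) (fun r => (0 * r + 1) ^ 2 * dens t r)).
  - intros r _. simpl. ring.
  - apply ex_RInt_weighted_density; lra.
Qed.

Definition weighted_energy (a b r1 r2 t : R) : R :=
  RInt (fun r => (a * r + b) ^ 2 * dens t r) r1 r2.

Lemma is_derive_weighted_energy a b r1 r2 t : 0 < r1 <= r2 -> 0 < t < T ->
  is_derive (weighted_energy a b r1 r2) t (RInt (weighted_density_dt a b t) r1 r2).
Proof.
  intros Hr Ht. unfold weighted_energy.
  rewrite <- (RInt_ext (fun r => Derive (fun s => (a * r + b) ^ 2 * dens s r) t)).
  2:{ intros r Hr'. rewrite Rmin_left, Rmax_right in Hr' by lra.
      apply is_derive_unique, is_derive_weighted_density; lra. }
  apply (is_derive_RInt_param (fun s r => (a * r + b) ^ 2 * dens s r)).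
  - apply (locally_interval _ t 0 T); simpl; try lra.
    intros s Hs0 HsT r Hr'. rewrite Rmin_left, Rmax_right in Hr' by lra.
    eexists. apply is_derive_weighted_density; lra.
  - intros r Hr'. rewrite Rmin_left, Rmax_right in Hr' by lra.
    apply (continuity_2d_pt_ext_loc (weighted_density_dt a b));
      [|apply weighted_density_dt_continuity_2d; lra].
    apply locally_2d_domain; try lra. intros s r' Hs Hr''.
    symmetry. apply is_derive_unique, is_derive_weighted_density; lra.
  - apply (locally_interval _ t 0 T); simpl; try lra.
    intros s Hs0 HsT. apply ex_RInt_weighted_density; lra.
Qed.

Lemma RInt_weighted_density_dt_le a b r1 r2 t : 0 < r1 <= r2 -> 0 < t < T ->
  RInt (weighted_density_dt a b t) r1 r2
  <= flux a b t r2 - flux a b t r1 + 2 * a ^ 2 * RInt (dens t) r1 r2.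
Proof.
  intros Hr Ht.
  assert (Hflux : is_RInt (flux_dr a b t) r1 r2 (flux a b t r2 - flux a b t r1)).
  { apply (is_RInt_derive (flux a b t));
      intros r Hr'; rewrite Rmin_left, Rmax_right in Hr' by lra.
    - apply is_derive_flux; lra.
    - apply (continuity_2d_pt_continuous_snd (flux_dr a b)).
      apply flux_dr_continuity_2d; lra. }
  assert (Hdens := RInt_correct _ _ _ (ex_RInt_density t r1 r2 Ht ltac:(lra) ltac:(lra))).
  assert (Hsum : is_RInt (fun r => flux_dr a b t r + 2 * a ^ 2 * dens t r) r1 r2
                   (flux a b t r2 - flux a b t r1 + 2 * a ^ 2 * RInt (dens t) r1 r2))
    by exact (is_RInt_plus _ _ _ _ _ _ Hflux (is_RInt_scal _ _ _ (2 * a ^ 2) _ Hdens)).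
  rewrite <- (is_RInt_unique _ _ _ _ Hsum).
  apply RInt_le; [lra | | eexists; exact Hsum |].
  - apply (ex_RInt_continuous (V:=R_CompleteNormedModule)).
    intros r Hr'. rewrite Rmin_left, Rmax_right in Hr' by lra.
    apply (continuity_2d_pt_continuous_snd (weighted_density_dt a b)).
    apply weighted_density_dt_continuity_2d; lra.
  - intros r Hr'. apply weighted_density_dt_le; lra.
Qed.

Lemma flux_eq_weight a b a' b' t r : a * r + b = a' * r + b' ->
  flux a b t r = flux a' b' t r.
Proof. intros Hw. unfold flux. rewrite Hw. reflexivity. Qed.

Lemma flux_weight0 a b t r : a * r + b = 0 -> flux a b t r = 0.
Proof. intros Hw. unfold flux. rewrite Hw. ring. Qed.

Lemma weighted_energy_ge0 a b r1 r2 t : 0 < r1 <= r2 -> 0 < t < T ->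
  0 <= weighted_energy a b r1 r2 t.
Proof.
  intros Hr Ht. apply RInt_ge_0; [lra | apply ex_RInt_weighted_density; lra |].
  intros r Hr'. apply Rmult_le_pos; [apply pow2_ge_0 | apply energy_density_ge0; lra].
Qed.

Lemma weighted_energy_0_1 r1 r2 t : weighted_energy 0 1 r1 r2 t = RInt (dens t) r1 r2.
Proof. apply RInt_ext. intros r _. simpl. ring. Qed.

Lemma weighted_energy_le a b r1 r2 t : 0 < r1 <= r2 -> 0 < t < T ->
  (forall r, r1 <= r <= r2 -> 0 <= a * r + b <= 1) ->
  weighted_energy a b r1 r2 t <= RInt (dens t) r1 r2.
Proof.
  intros Hr Ht Hw.
  apply RInt_le; [lra | apply ex_RInt_weighted_density; lra | apply ex_RInt_density; lra |].
  intros r Hr'. pose proof (energy_density_ge0 m (u t) r ltac:(lra)).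
  specialize (Hw r ltac:(lra)).
  assert ((a * r + b) ^ 2 <= 1) by nra. nra.
Qed.

(* [cutoff_energy R0 A t = int psi^2 dens(t)] for the piecewise linear [psi]
   rising from 0 at [R0] to 1 at [2 R0] and falling back to 0 from [A] to [2 A]. *)
Definition cutoff_energy (R0 A t : R) : R :=
  weighted_energy (/ R0) (-1) R0 (2 * R0) t + weighted_energy 0 1 (2 * R0) A t
  + weighted_energy (- / A) 2 A (2 * A) t.

Lemma cutoff_energy_ge R0 A t : 0 < R0 -> 2 * R0 <= A -> 0 < t < T ->
  RInt (dens t) (2 * R0) A <= cutoff_energy R0 A t.
Proof.
  intros HR0 HA Ht. unfold cutoff_energy. rewrite weighted_energy_0_1.
  pose proof (weighted_energy_ge0 (/ R0) (-1) R0 (2 * R0) t ltac:(lra) Ht).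
  pose proof (weighted_energy_ge0 (- / A) 2 A (2 * A) t ltac:(lra) Ht).
  lra.
Qed.

Lemma cutoff_energy_le R0 A t : 0 < R0 -> 2 * R0 <= A -> 0 < t < T ->
  cutoff_energy R0 A t <= RInt (dens t) R0 (2 * A).
Proof.
  intros HR0 HA Ht. unfold cutoff_energy. rewrite weighted_energy_0_1.
  assert (Hramp_up : weighted_energy (/ R0) (-1) R0 (2 * R0) t <= RInt (dens t) R0 (2 * R0)).
  { apply weighted_energy_le; try lra. intros r Hr.
    pose proof (Rinv_0_lt_compat R0 HR0). assert (/ R0 * R0 = 1) by (field; lra). nra. }
  assert (Hramp_down : weighted_energy (- / A) 2 A (2 * A) t <= RInt (dens t) A (2 * A)).
  { apply weighted_energy_le; try lra. intros r Hr.
    pose proof (Rinv_0_lt_compat A ltac:(lra)). assert (/ A * A = 1) by (field; lra). nra. }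
  rewrite <- (RInt_Chasles_pos (dens t) (fun a b Ha Hab => ex_RInt_density t a b Ht Ha Hab)
                R0 A (2 * A)), <- (RInt_Chasles_pos (dens t)
                (fun a b Ha Hab => ex_RInt_density t a b Ht Ha Hab) R0 (2 * R0) A) by lra.
  lra.
Qed.

Lemma cutoff_energy_derive_le R0 A M t : 0 < R0 -> 2 * R0 <= A -> 0 < t < T ->
  (forall r1 r2, 0 < r1 <= r2 -> RInt (dens t) r1 r2 <= M) ->
  ex_derive (cutoff_energy R0 A) t /\ Derive (cutoff_energy R0 A) t <= 4 * M / R0 ^ 2.
Proof.
  intros HR0 HA Ht HM.
  assert (HD : is_derive (cutoff_energy R0 A) t
                 (RInt (weighted_density_dt (/ R0) (-1) t) R0 (2 * R0)
                  + RInt (weighted_density_dt 0 1 t) (2 * R0) A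
                  + RInt (weighted_density_dt (- / A) 2 t) A (2 * A)))
    by exact (is_derive_plus _ _ _ _ _
    (is_derive_plus _ _ _ _ _
       (is_derive_weighted_energy (/ R0) (-1) R0 (2 * R0) t ltac:(lra) Ht)
       (is_derive_weighted_energy 0 1 (2 * R0) A t ltac:(lra) Ht))
    (is_derive_weighted_energy (- / A) 2 A (2 * A) t ltac:(lra) Ht)).
  split; [eexists; exact HD |]. rewrite (is_derive_unique _ _ _ HD).
  pose proof (RInt_weighted_density_dt_le (/ R0) (-1) R0 (2 * R0) t ltac:(lra) Ht).
  pose proof (RInt_weighted_density_dt_le 0 1 (2 * R0) A t ltac:(lra) Ht).
  pose proof (RInt_weighted_density_dt_le (- / A) 2 A (2 * A) t ltac:(lra) Ht).
  rewrite (flux_weight0 (/ R0) (-1) t R0) in * by (field; lra).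
  rewrite (flux_eq_weight (/ R0) (-1) 0 1 t (2 * R0)) in * by (field; lra).
  rewrite (flux_eq_weight 0 1 (- / A) 2 t A) in * by (field; lra).
  rewrite (flux_weight0 (- / A) 2 t (2 * A)) in * by (field; lra).
  assert (Hdens_ge0 : forall a b, 0 < a -> a <= b -> 0 <= RInt (dens t) a b).
  { apply RInt_ge0; [intros a b; apply ex_RInt_density, Ht | intros r; apply energy_density_ge0]. }
  assert (Hup : 2 * (/ R0) ^ 2 * RInt (dens t) R0 (2 * R0) <= 2 * M / R0 ^ 2).
  { pose proof (HM R0 (2 * R0) ltac:(lra)).
    assert (0 < / R0 ^ 2) by (apply Rinv_0_lt_compat, pow_lt; lra).
    rewrite pow_inv. unfold Rdiv. nra. }
  assert (Hdown : 2 * (- / A) ^ 2 * RInt (dens t) A (2 * A) <= 2 * M / R0 ^ 2).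
  { pose proof (HM A (2 * A) ltac:(lra)).
    pose proof (Hdens_ge0 A (2 * A) ltac:(lra) ltac:(lra)).
    assert (0 < / A ^ 2) by (apply Rinv_0_lt_compat, pow_lt; lra).
    assert (/ A ^ 2 <= / R0 ^ 2) by (apply Rinv_le_contravar; [apply pow_lt | apply pow_incr]; lra).
    replace ((- / A) ^ 2) with (/ A ^ 2) by (field; lra). unfold Rdiv. nra. }
  lra.
Qed.

Lemma cutoff_energy_growth R0 A M t0 t : 0 < R0 -> 2 * R0 <= A -> 0 < t0 <= t -> t < T ->
  (forall s, 0 < s < T -> forall r1 r2, 0 < r1 <= r2 -> RInt (dens s) r1 r2 <= M) ->
  RInt (dens t) (2 * R0) A <= RInt (dens t0) R0 (2 * A) + 4 * M / R0 ^ 2 * (t - t0).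
Proof.
  intros HR0 HA Ht HT HM.
  pose proof (cutoff_energy_ge R0 A t HR0 HA ltac:(lra)).
  pose proof (cutoff_energy_le R0 A t0 HR0 HA ltac:(lra)).
  enough (cutoff_energy R0 A t <= cutoff_energy R0 A t0 + 4 * M / R0 ^ 2 * (t - t0)) by lra.
  apply le_of_Derive_le; [lra |]. intros s Hs.
  apply cutoff_energy_derive_le; try lra. apply HM. lra.
Qed.

Lemma RInt_density_le_of_has_energy M :
  (forall t, 0 < t < T -> exists e, has_energy m (u t) e /\ e <= M) ->
  forall t, 0 < t < T -> forall r1 r2, 0 < r1 <= r2 -> RInt (dens t) r1 r2 <= M.
Proof.
  intros HM t Ht r1 r2 Hr. destruct (HM t Ht) as [e [He HeM]].
  enough (RInt (dens t) r1 r2 <= e) by lra.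
  apply (RInt_le_is_RInt_gen (dens t)); try lra.
  - intros a b. apply ex_RInt_density, Ht.
  - intros r. apply energy_density_ge0.
  - exact He.
Qed.

Lemma energy_out_le R1 X M t0 t : 0 < R1 -> 0 < t0 <= t -> t < T ->
  (forall s, 0 < s < T -> forall r1 r2, 0 < r1 <= r2 -> RInt (dens s) r1 r2 <= M) ->
  (forall b, 2 * R1 < b -> RInt (dens t0) R1 (2 * b) <= X) ->
  energy_out m (u t) (2 * R1) <= X + 4 * M / R1 ^ 2 * (t - t0).
Proof.
  intros HR1 Ht HT HM HX.
  apply RInt_gen_pinfty_le; [| | lra |].
  - intros a b. apply ex_RInt_density. lra.
  - intros r. apply energy_density_ge0.
  - intros b Hb. pose proof (HX b Hb).
    pose proof (cutoff_energy_growth R1 b M t0 t HR1 ltac:(lra) Ht HT HM). lra.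
Qed.

End HeatFlow.

Lemma growth_term_le M T eps R1 s : 0 <= M -> 0 < eps -> 0 <= s <= T ->
  1 <= R1 -> 8 * M * T / eps <= R1 -> 4 * M / R1 ^ 2 * s <= eps / 2.
Proof.
  intros HM Heps Hs HR1 HR1M.
  assert (HMT : 8 * M * T <= R1 * eps).
  { apply Rmult_le_compat_r with (r := eps) in HR1M; [|lra].
    unfold Rdiv in HR1M. rewrite Rmult_assoc, Rinv_l, Rmult_1_r in HR1M by lra. lra. }
  assert (HR1sq : 0 < R1 ^ 2) by (apply pow_lt; lra).
  apply Rmult_le_reg_r with (R1 ^ 2); [exact HR1sq |].
  replace (4 * M / R1 ^ 2 * s * R1 ^ 2) with (4 * M * s) by (field; lra).
  assert (4 * M * s <= 4 * M * T) by nra.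
  assert (R1 <= R1 ^ 2) by (simpl; nra).
  assert (R1 * eps <= R1 ^ 2 * eps) by (apply Rmult_le_compat_r; lra).
  lra.
Qed.

Theorem lemma3p1 (m : nat) (T : R) (u : R -> R -> R) :
  (1 <= m)%nat ->
  0 < T ->
  smooth_on (fun t r => 0 < t < T /\ 0 < r) u ->
  hmhf_solution m T u ->
  (* finite energy: E(u(t)) is finite, uniformly on (0,T) *)
  (exists M : R, forall t, 0 < t < T ->
     exists e, has_energy m (u t) e /\ e <= M) ->
  (* lim_{R -> oo} limsup_{t -> T} E(u(t); B_R^c) = 0 *)
  forall eps : R, 0 < eps ->
    exists R0 : R, forall Rad : R, R0 <= Rad ->
      exists delta : R, 0 < delta /\
        forall t : R, T - delta < t < T -> energy_out m (u t) Rad <= eps.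
Proof.
  intros _ HT Hsmooth Hsol [M HM] eps Heps.
  assert (HMint := RInt_density_le_of_has_energy m T u Hsmooth M HM).
  assert (Ht0 : 0 < T / 2 < T) by lra.
  assert (HM0 : 0 <= M).
  { specialize (HMint (T / 2) Ht0 1 1 ltac:(lra)). rewrite RInt_point in HMint. exact HMint. }
  destruct (HM (T / 2) Ht0) as [e0 [He0 _]].
  destruct (RInt_tail_small _ (fun a b => ex_RInt_density m T u Hsmooth (T / 2) a b Ht0)
              e0 (eps / 2) He0 ltac:(lra)) as [N [HN Htail]].
  exists (2 * (N + 1 + 8 * M * T / eps)). intros Rad HRad.
  assert (HMT : 0 <= 8 * M * T / eps)
    by (apply Rmult_le_pos; [nra | left; apply Rinv_0_lt_compat, Heps]).
  exists (T / 2). split; [lra |]. intros t Ht.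
  replace Rad with (2 * (Rad / 2)) by field.
  eapply Rle_trans.
  - apply (energy_out_le m T u Hsmooth Hsol (Rad / 2) (eps / 2) M (T / 2) t);
      [lra | lra | lra | exact HMint |].
    intros b Hb. apply Htail; lra.
  - pose proof (growth_term_le M T eps (Rad / 2) (t - T / 2) HM0 Heps
                  ltac:(lra) ltac:(lra) ltac:(lra)).
    lra.
Qed.
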